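(* Let $\Sigma$ be an $(m,n)$-multirate system with operators $A_t,B_t,C_t,D_t$, let $\mathcal A:=\mathcal T_{m\overline n}(A)$, $\mathcal B:=\mathcal T_{m\overline n}(B)$, $\mathcal C:=\mathcal T_{m\overline n}(C)$, $\mathcal D:=\mathcal T_{m\overline n}(D)$, let $0\neq z\in\rho_{m\overline n}(\mathcal A)$, let the input $u$ be a $U$-valued $(n,z^{\overline m})$-EMP and put $\mathbf u:=\mathcal F_{n,z^{\overline m}}u$. \begin{enumerate} \item There is a unique initial state $x_0\in X$ such that the signals $u^\circ$, $x$, $y^\circ$ of the central system of $\Sigma$ with $x(0)=x_0$ are $(m\overline n,z)$-EMPs, and the output $y$ is an $(m,z^{\overline n})$-EMP. \item For this $x_0$, with $\mathbf u^\circ:=\mathcal F_{m\overline n,z}u^\circ$, $\mathbf x:=\mathcal F_{m\overline n,z}x$, $\mathbf y^\circ:=\mathcal F_{m\overline n,z}y^\circ$ and $\mathbf y:=\mathcal F_{m,z^{\overline n}}y$, one has \[ \mathcal N_{m\overline n}\mathbf x=z\mathcal A\mathbf x+z\mathcal B\mathbf u^\circ,\quad \mathbf y^\circ=\mathcal C\mathbf x+\mathcal D\mathbf u^\circ,\quad \mathbf u^\circ=\Pi_{n,1,\overline m}\mathbf u/\overline m,\quad \mathbf y=\Pi_{m,1,\overline n}^*\mathbf y^\circ. \tag{$\ast$} \] Conversely, if $\mathbf u\in U^n$, $\mathbf u^\circ\in U^{m\overline n}$, $\mathbf x\in X^{m\overline n}$, $\mathbf y^\circ\in Y^{m\overline n}$,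 $\mathbf y\in Y^m$ satisfy $(\ast)$, then the corresponding time-domain sequences $u=\mathcal F_{n,z^{\overline m}}^{-1}\mathbf u$, $u^\circ=\mathcal F^{-1}_{m\overline n,z}\mathbf u^\circ$, $x=\mathcal F^{-1}_{m\overline n,z}\mathbf x$, $y^\circ=\mathcal F^{-1}_{m\overline n,z}\mathbf y^\circ$, $y=\mathcal F^{-1}_{m,z^{\overline n}}\mathbf y$ satisfy the equations of $\Sigma$, and $x(0)$ equals the sum of the entries of $\mathbf x$. \item For $z\in\rho_{m\overline n}(\mathcal A)$, $\mathbf u$ uniquely determines $\mathbf u^\circ,\mathbf x,\mathbf y^\circ,\mathbf y$ in $(\ast)$; in particular the map $\mathbf u\mapsto\mathbf y$ equals \[ \mathcal G(z):=\Pi_{m,1,\overline n}^*\big(z\mathcal C(\mathcal N_{m\overline n}-z\mathcal A)^{-1}\mathcal B+\mathcal D\big)\Pi_{n,1,\overline m}/\overline m . \] \end{enumerate}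
   Context: $j$ is the imaginary unit; $U,X,Y$ are separable complex Hilbert spaces. Upsampler: $(\uparrow_q v)_t=v_{t/q}$ if $t/q\in\mathbb Z$, else $0$; downsampler: $(\downarrow_q v)_t=v_{qt}$. Multirate system: for $m,n\in\mathbb Z^+$ let $c=\gcd(m,n)$, $\overline m=m/c$, $\overline n=n/c$. An $(m,n)$-multirate system $\Sigma$ consists of $m\overline n$-periodic sequences of bounded operators $A_t:X\to X$, $B_t:U\to X$, $C_t:X\to Y$, $D_t:U\to Y$ and the equations $x_{t+1}=A_tx_t+B_tu^\circ_t$, $y^\circ_t=C_tx_t+D_tu^\circ_t$, $u^\circ=\uparrow_{\overline m}u$, $y=\downarrow_{\overline n}y^\circ$ (input $u$, state $x$, output $y$); the part with input $u^\circ$ and output $y^\circ$ is the central system. EMPs: a $V$-valued $(T,z)$-EMP ($z\ne0$) is $v_t=z^{-t}\sum_{k=0}^{T-1}\widehat v_ke^{2\pi jtk/T}$, $t\in\mathbb Z$; $\mathcal F_{T,z}v:=(\widehat v_k)_{k=0}^{T-1}$ with $\widehat v_k=\frac1T\sum_{t=0}^{T-1}v_tz^te^{-2\pi jtk/T}$. An EMP is identified with its restriction to any set containing $T$ consecutive integers (e.g. $\mathbb N_0$ or $\{0,\dots,T-1\}$), and $\mathcal F_{T,z}^{-1}$ returns the restriction to $\{0,\dots,T-1\}$. $\Pi_{T,w,q}:V^T\to V^{qT}$, $(\Pi_{T,w,q}v)_{t+kT}=w^{kT}v_t$ ($0\le t<T$, $0\le k<q$), and $\Pi^*_{T,w,q}:V^{qT}\to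 V^T$, $(\Pi^*_{T,w,q}v)_t=\sum_{k=0}^{q-1}\overline w^{kT}v_{t+kT}$. For a $T$-periodic operator sequence $A_t$: $\widehat A_k=\frac1T\sum_{t=0}^{T-1}A_te^{-2\pi jtk/T}$ and the Toeplitz transform $\mathcal T_T(A)$ is the $T\times T$ block operator matrix with entry $\widehat A_{(r-\ell)\bmod T}$ in row $r$, column $\ell$. $\mathcal N_T:=\mathrm{diag}(e^{2\pi jk/T}I)_{k=0}^{T-1}$ (identity of the relevant space). $\rho_T(\mathcal A):=\{z\in\mathbb C:\mathcal N_T-z\mathcal A\text{ has a bounded inverse}\}$. *)

From HB Require Import structures.
From mathcomp Require Import all_boot all_order all_algebra.
From mathcomp Require Import all_classical all_reals all_analysis.
From mathcomp Require Import complex.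
Set Implicit Arguments. Unset Strict Implicit. Unset Printing Implicit Defensive.
Import Order.TTheory GRing.Theory Num.Theory.
Import numFieldNormedType.Exports.
Local Open Scope ring_scope.

Section MultirateDefs.
Variable R : realType.
Local Notation C := (R[i]).

Definition omega (T : nat) : C :=
  Complex (cos (2 * pi / T%:R)) (sin (2 * pi / T%:R)).

Section Signals.
Variable V : lmodType C.

Definition upsample (q : nat) (v : nat -> V) : nat -> V :=
  fun t => if (q %| t)%N then v (t %/ q)%N else 0.
Definition downsample (q : nat) (v : nat -> V) : nat -> V := fun t => v (q * t)%N.

(* inverse transform: the (T,z)-EMP with coefficients vh, restricted to N_0 *)
Definition Finv (T : nat) (z : C) (vh : 'I_T -> V) : nat -> V :=
  fun t => z ^- t *: \sum_(k < T) (omega T ^+ (t * k)) *: vh k.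

Definition IsEMP (T : nat) (z : C) (v : nat -> V) : Prop :=
  exists vh : 'I_T -> V, forall t, v t = Finv z vh t.

Definition Fourier (T : nat) (z : C) (v : nat -> V) : 'I_T -> V :=
  fun k => (T%:R)^-1 *: \sum_(t < T) (z ^+ t * omega T ^- (t * k)) *: v t.

Definition ext (N : nat) (v : 'I_N -> V) (j : nat) : V :=
  match (insub j : option 'I_N) with Some i => v i | None => 0 end.

(* Pi_{T,w,q} : V^T -> V^{qT}   (N is the target length, N = q*T) *)
Definition Pi (T : nat) (w : C) (q N : nat) (v : 'I_T -> V) : 'I_N -> V :=
  fun i => w ^+ ((i %/ T) * T)%N *: ext v (i %% T)%N.

(* Pi^*_{T,w,q} : V^{qT} -> V^T   (N is the source length, N = q*T) *)
Definition Pistar (T : nat) (w : C) (q N : nat) (v : 'I_N -> V) : 'I_T -> V :=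
  fun t => \sum_(k < q) ((w^*)%C ^+ (k * T)) *: ext v (t + k * T)%N.

Definition Nop (T : nat) (v : 'I_T -> V) : 'I_T -> V :=
  fun k => omega T ^+ k *: v k.

End Signals.
Arguments Pi {V} T w q N v _.
Arguments Pistar {V} T w q N v _.
Arguments Fourier {V} T z v _.

Section Ops.
Variables V W : lmodType C.

Definition opHat (T : nat) (A : nat -> {linear V -> W}) (k : nat) (v : V) : W :=
  (T%:R)^-1 *: \sum_(t < T) (omega T ^- (t * k)) *: A t v.

(* action of the Toeplitz transform T_T(A) on V^T *)
Definition Toep (T : nat) (A : nat -> {linear V -> W}) (x : 'I_T -> V) : 'I_T -> W :=
  fun r => \sum_(l < T) opHat T A ((r + T - l) %% T)%N (x l).

End Ops.

Section Normed.
Variables V W : normedModType C.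

Definition bounded_op (f : V -> W) : Prop :=
  exists M : C, forall v, `|f v| <= M * `|v|.

(* boundedness of an operator on V^T (for the equivalent l^1-type norm) *)
Definition bounded_blk (T : nat) (G : ('I_T -> V) -> ('I_T -> W)) : Prop :=
  exists M : C, forall v, \sum_(k < T) `|G v k| <= M * \sum_(k < T) `|v k|.
End Normed.

Definition rho (V : normedModType C) (T : nat) (Aop : ('I_T -> V) -> ('I_T -> V)) : set C :=
  [set z | exists G : ('I_T -> V) -> ('I_T -> V),
     (forall v, G (fun k => Nop v k - z *: Aop v k) = v) /\
     (forall v, (fun k => Nop (G v) k - z *: Aop (G v) k) = v) /\
     bounded_blk G].

Section System.
Variables (U X Y : lmodType C).
Variables (A : nat -> {linear X -> X}) (B : nat -> {linear U -> X})
          (Cc : nat -> {linear X -> Y}) (D : nat -> {linear U -> Y}).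

Fixpoint traj (uo : nat -> U) (x0 : X) (t : nat) : X :=
  match t with
  | 0 => x0
  | t'.+1 => A t' (traj uo x0 t') + B t' (uo t')
  end.

Definition outo (uo : nat -> U) (x : nat -> X) : nat -> Y :=
  fun t => Cc t (x t) + D t (uo t).

Definition SigmaEqs (mb nb : nat) (u uo : nat -> U) (x : nat -> X)
    (yo y : nat -> Y) : Prop :=
  [/\ forall t, x t.+1 = A t (x t) + B t (uo t),
      forall t, yo t = Cc t (x t) + D t (uo t),
      forall t, uo t = upsample mb u t &
      forall t, y t = downsample nb yo t].

Definition StarEqs (m n mb nb : nat) (z : C)
    (bu : 'I_n -> U) (buo : 'I_(m * nb)%N -> U) (bx : 'I_(m * nb)%N -> X)
    (byo : 'I_(m * nb)%N -> Y) (by_ : 'I_m -> Y) : Prop :=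
  [/\ forall k, Nop bx k = z *: Toep A bx k + z *: Toep B buo k,
      forall k, byo k = Toep Cc bx k + Toep D buo k,
      forall k, buo k = (mb%:R)^-1 *: Pi n 1 mb (m * nb)%N bu k &
      forall k, by_ k = Pistar m 1 nb (m * nb)%N byo k].

End System.

End MultirateDefs.

Arguments Pi {R V} T w q N v _.
Arguments Pistar {R V} T w q N v _.
Arguments Fourier {R V} T z v _.
Arguments StarEqs {R U X Y} A B Cc D m n mb nb z bu buo bx byo by_.

From HB Require Import structures.
From mathcomp Require Import all_boot all_order all_algebra.
From mathcomp Require Import all_classical all_reals all_analysis.
From mathcomp Require Import complex.
From mathcomp Require Import ring lra zify.
Set Implicit Arguments. Unset Strict Implicit. Unset Printing Implicit Defensive.
Import Order.TTheory GRing.Theory Num.Theory.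
Import numFieldNormedType.Exports.
Local Open Scope ring_scope.

(* A (T,z)-EMP restricted to the naturals is the image [Finv z v] of its coefficient
   vector, and [Finv z] is injective with left inverse [Fourier T z], because the
   powers of the primitive T-th root of unity [omega T] are orthogonal.  Under [Finv],
   the time shift becomes [Nop] divided by z, multiplication by a T-periodic operator
   sequence becomes its Toeplitz transform, upsampling by mb becomes [Pi] divided by
   mb and downsampling by nb becomes [Pistar].  Hence the equations of the system on
   EMP signals are equivalent to the relations (star) on their coefficients.  As
   [Nop - z Toep A] is invertible, (star) has exactly one solution for every input
   coefficient vector; the state trajectory of that solution starts at the sum of its
   coefficients, and solving (star) for the output gives G(z). *)

Lemma dvdn_addnB_eq T k l : (k < T)%N -> (l < T)%N -> (T %| l + T - k)%N = (l == k).
Proof.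
move=> kT lT; rewrite -eqn_mod_dvd; last by lia.
by rewrite modnDr !modn_small.
Qed.

Lemma modn_addnBK P k l : (k < P)%N -> (l < P)%N -> (((k + l) %% P + P - l) %% P = k)%N.
Proof.
move=> kP lP; rewrite -[RHS](modn_small kP); apply/eqP.
rewrite -(eqn_modDr l) subnK; last by rewrite (leq_trans (ltnW lP)) ?leq_addl.
by rewrite modnDr modn_mod.
Qed.

Section RootsOfUnity.
Variable R : realType.
Local Notation theta T := (2 * pi / T%:R : R).

Lemma omega_expr T j :
  omega R T ^+ j = Complex (cos (j%:R * theta T)) (sin (j%:R * theta T)).
Proof.
elim: j => [|j IH]; first by rewrite expr0 !mul0r cos0 sin0.
rewrite exprSr IH /omega.
have -> : j.+1%:R * theta T = j%:R * theta T + theta T by rewrite -addn1 natrD mulrDl mul1r.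
rewrite cosD sinD.
by apply/eqP; rewrite eq_complex /=; apply/andP; split; apply/eqP; ring.
Qed.

Lemma omega_order T : (0 < T)%N -> omega R T ^+ T = 1.
Proof.
move=> T0; rewrite omega_expr.
have -> : T%:R * theta T = pi *+ 2 by rewrite mulr2n; field; rewrite pnatr_eq0 -lt0n.
by rewrite cos2pi sin2pi.
Qed.

Lemma omega_expr_neq1 T j : (0 < j < T)%N -> omega R T ^+ j != 1.
Proof.
move=> /andP[j0 jT]; have T0 : (0 < T)%N by apply: leq_trans jT.
rewrite omega_expr; apply/negP => /eqP [cos1 _].
set a := j%:R * theta T in cos1.
(* [cos a = 1] forces [sin (a/2) = 0], impossible for [0 < a/2 < pi]. *)
have sin_half0 : sin (a / 2) = 0.
  have := cos_mulr2n (a / 2); rewrite -[_ *+ 2]mulr_natr divfK ?pnatr_eq0 //.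
  rewrite cos1 => e; have : sin (a / 2) ^+ 2 = 0 by rewrite sin2cos2; lra.
  by move/eqP; rewrite expf_eq0 /= => /eqP.
suff : 0 < sin (a / 2) by rewrite sin_half0 ltxx.
have -> : a / 2 = pi * (j%:R / T%:R) by rewrite /a; field; rewrite pnatr_eq0 -lt0n.
apply: sin_gt0_pi; rewrite mulr_gt0 ?pi_gt0 ?divr_gt0 ?ltr0n //=.
by rewrite -[X in _ < X]mulr1 ltr_pM2l ?pi_gt0 // ltr_pdivrMr ?ltr0n // mul1r ltr_nat.
Qed.

Lemma omega_prim T : (0 < T)%N -> T.-primitive_root (omega R T).
Proof.
move=> T0; rewrite /primitive_root_of_unity T0; apply/forallP => i.
rewrite unity_rootE; case: (i.+1 =P T) => [->|iT]; first by rewrite omega_order ?eqxx.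
have ltiT : (0 < i.+1 < T)%N by rewrite /= ltn_neqAle ltn_ord andbT; apply/negP => /eqP.
by rewrite (negbTE (omega_expr_neq1 ltiT)).
Qed.

Lemma omega_mul_expr q T : (0 < q)%N -> (0 < T)%N -> omega R (q * T) ^+ q = omega R T.
Proof.
move=> q0 T0; rewrite omega_expr -[omega R T]expr1 omega_expr natrM mul1r.
by congr Complex; congr (_ _); field; rewrite ?pnatr_eq0 -?lt0n ?q0 ?T0.
Qed.

End RootsOfUnity.

Section PrimitiveRootSums.
Variables (F : fieldType) (n : nat) (w : F).
Hypothesis prim_w : n.-primitive_root w.

Lemma sum_prim_root_expr j :
  \sum_(t < n) w ^+ (t * j) = if (n %| j)%N then n%:R else 0.
Proof.
case: ifP => [/dvdnP[k ->] | ndvd].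
  rewrite (eq_bigr (fun=> 1)) ?sumr_const ?card_ord // => t _.
  by rewrite -(prim_expr_mod prim_w) mulnA modnMl expr0.
have wj1 : w ^+ j != 1 by rewrite -(prim_order_dvd prim_w) ndvd.
have := subrX1 (w ^+ j) n.
rewrite -exprM mulnC exprM (prim_expr_order prim_w) expr1n subrr.
move/esym/eqP; rewrite mulf_eq0 subr_eq0 (negbTE wj1) /= => /eqP sum0.
by rewrite -[RHS]sum0; apply: eq_bigr => t _; rewrite mulnC exprM.
Qed.

Lemma sum_prim_root_delta (k l : 'I_n) :
  \sum_(t < n) w ^- (t * k) * w ^+ (t * l) = if l == k then n%:R else 0.
Proof.
have kn := ltn_ord k; have ln := ltn_ord l.
have w0 : w != 0 by rewrite (prim_root_eq0 prim_w) -lt0n (leq_ltn_trans _ kn).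
rewrite -val_eqE -(dvdn_addnB_eq kn ln) -sum_prim_root_expr; apply: eq_bigr => t _.
apply: (mulIf (expf_neq0 (t * k) w0)); rewrite mulrAC mulVf ?expf_neq0 // mul1r.
rewrite -exprD -mulnDr subnK; last by rewrite (leq_trans (ltnW kn)) ?leq_addl.
by rewrite mulnDr exprD -(prim_expr_mod prim_w (t * n)) modnMl expr0 mulr1.
Qed.

End PrimitiveRootSums.

Section DiscreteFourier.
Variable R : realType.
Local Notation w := (omega R).
Variable V : lmodType R[i].

Lemma FinvD T z (f g : 'I_T -> V) t :
  Finv z (fun k => f k + g k) t = Finv z f t + Finv z g t.
Proof.
rewrite /Finv -scalerDr -big_split /=; congr (_ *: _).
by apply: eq_bigr => k _; rewrite scalerDr.
Qed.

Lemma FinvZ T z a (f : 'I_T -> V) t : Finv z (fun k => a *: f k) t = a *: Finv z f t.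
Proof.
rewrite /Finv scalerA [a * _]mulrC -scalerA; congr (_ *: _).
by rewrite scaler_sumr; apply: eq_bigr => k _; rewrite !scalerA mulrC.
Qed.

Lemma Finv0 T z (f : 'I_T -> V) : Finv z f 0 = \sum_(k < T) f k.
Proof. by rewrite /Finv invr1 scale1r; apply: eq_bigr => k _; rewrite expr0 scale1r. Qed.

Lemma eq_Finv T z (f g : 'I_T -> V) : f =1 g -> Finv z f =1 Finv z g.
Proof. by move=> fg t; rewrite /Finv; congr (_ *: _); apply: eq_bigr => k _; rewrite fg. Qed.

Lemma Finv_Nop T z (v : 'I_T -> V) t : z != 0 -> Finv z (Nop v) t = z *: Finv z v t.+1.
Proof.
move=> z0; rewrite /Finv /Nop scalerA exprS invfM mulrA mulfV // mul1r.
by congr (_ *: _); apply: eq_bigr => k _; rewrite scalerA -exprD mulSn addnC.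
Qed.

Lemma Fourier_Finv T z (v : 'I_T -> V) : (0 < T)%N -> z != 0 -> Fourier T z (Finv z v) = v.
Proof.
move=> T0 z0; apply/funext => k; rewrite /Fourier.
have E (t : 'I_T) : (z ^+ t * w T ^- (t * k)) *: Finv z v t
    = \sum_(l < T) (w T ^- (t * k) * w T ^+ (t * l)) *: v l.
  rewrite /Finv scalerA mulrAC mulfV ?expf_neq0 // mul1r scaler_sumr.
  by apply: eq_bigr => l _; rewrite scalerA.
rewrite (eq_bigr _ (fun t _ => E t)) exchange_big /=.
under eq_bigr => l _ do rewrite -scaler_suml (sum_prim_root_delta (omega_prim R T0)) //.
rewrite (bigD1 k) //= eqxx big1 ?addr0 => [|l /negbTE->]; last by rewrite scale0r.
by rewrite scalerA mulVf ?scale1r // pnatr_eq0 -lt0n.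
Qed.

Lemma Finv_inj T z (f g : 'I_T -> V) : (0 < T)%N -> z != 0 -> Finv z f =1 Finv z g -> f =1 g.
Proof.
move=> T0 z0 /funext fg k.
by rewrite -(Fourier_Finv f T0 z0) -(Fourier_Finv g T0 z0) fg.
Qed.

Lemma Finv_eqfunP T z (f g : 'I_T -> V) (s : nat -> V) : (0 < T)%N -> z != 0 ->
  Finv z g =1 s -> f =1 g <-> Finv z f =1 s.
Proof.
move=> T0 z0 gs; split=> [fg t | fs]; first by rewrite (eq_Finv _ fg) gs.
by apply: (Finv_inj T0 z0) => t; rewrite fs gs.
Qed.

Lemma EMP_Finv_Fourier T z (v : nat -> V) : (0 < T)%N -> z != 0 ->
  IsEMP T z v -> Finv z (Fourier T z v) = v.
Proof. by move=> T0 z0 [vh /funext ->]; rewrite Fourier_Finv. Qed.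

End DiscreteFourier.

Lemma modn_periodic (T : Type) (f : nat -> T) P t :
  (forall t, f (t + P)%N = f t) -> f (t %% P)%N = f t.
Proof.
move=> fP; rewrite {2}(divn_eq t P); elim: (t %/ P)%N => [|q IH]; first by rewrite add0n.
by rewrite mulSn -addnA addnC fP.
Qed.

Section Toeplitz.
Variable R : realType.
Local Notation w := (omega R).
Variables V W : lmodType R[i].
Variables (P : nat) (A : nat -> {linear V -> W}).

Lemma opHatZ k a v : opHat P A k (a *: v) = a *: opHat P A k v.
Proof.
rewrite /opHat scalerA [a * _]mulrC -scalerA; congr (_ *: _); rewrite scaler_sumr.
by apply: eq_bigr => s _; rewrite linearZ /= !scalerA mulrC.
Qed.

Lemma ToepZ (x : 'I_P -> V) a r : Toep A (fun k => a *: x k) r = a *: Toep A x r.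
Proof. by rewrite /Toep scaler_sumr; apply: eq_bigr => l _; rewrite opHatZ. Qed.

Hypotheses (P_gt0 : (0 < P)%N) (A_periodic : forall t, A (t + P)%N = A t).

Lemma opHat_series t v : A t v = \sum_(k < P) w P ^+ (t * k) *: opHat P A k v.
Proof.
have prim := omega_prim R P_gt0.
have tP : (t %% P < P)%N by rewrite ltn_mod.
pose r := Ordinal tP.
have E (k : 'I_P) : w P ^+ (t * k) *: opHat P A k v =
    P%:R^-1 *: \sum_(s < P) (w P ^- (k * s) * w P ^+ (k * r)) *: A s v.
  rewrite /opHat scalerA [_ * P%:R^-1]mulrC -scalerA scaler_sumr; congr (_ *: _).
  apply: eq_bigr => s _; rewrite scalerA mulrC [(s * k)%N]mulnC; congr (_ * _ *: _).
  by rewrite /= mulnC -[RHS](prim_expr_mod prim) modnMmr prim_expr_mod.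
rewrite (eq_bigr _ (fun k _ => E k)) -scaler_sumr exchange_big.
under eq_bigr => s _ do rewrite -scaler_suml (sum_prim_root_delta prim).
rewrite (bigD1 r) //= eqxx big1 ?addr0 => [|s /negbTE]; last by rewrite eq_sym => ->; rewrite scale0r.
by rewrite scalerA mulVf ?scale1r ?pnatr_eq0 -?lt0n // modn_periodic.
Qed.

Lemma Finv_Toep (x : 'I_P -> V) z t : A t (Finv z x t) = Finv z (Toep A x) t.
Proof.
have prim := omega_prim R P_gt0.
rewrite /Finv linearZ /= linear_sum /=; congr (_ *: _).
under [RHS]eq_bigr => r _ do rewrite /Toep scaler_sumr.
rewrite exchange_big /=; apply: eq_bigr => l _.
rewrite linearZ /= opHat_series scaler_sumr.
have hl (k : 'I_P) : ((k + l) %% P < P)%N by rewrite ltn_mod.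
pose h (k : 'I_P) := Ordinal (hl k).
have h_inj : injective h.
  move=> k1 k2 /(congr1 val) /eqP /=; rewrite eqn_modDr !modn_small // => /eqP.
  exact: ord_inj.
rewrite [RHS](reindex_inj h_inj) /=; apply: eq_bigr => k _.
rewrite modn_addnBK // scalerA -exprD -mulnDr; congr (_ *: _).
by rewrite /= addnC -[RHS](prim_expr_mod prim) modnMmr prim_expr_mod.
Qed.

End Toeplitz.

Lemma sum_nat_mul_ord (V : nmodType) a b (F : nat -> V) :
  \sum_(0 <= i < a * b) F i = \sum_(j < a) \sum_(k < b) F (j * b + k)%N.
Proof.
rewrite big_nat_mul big_mkord; apply: eq_bigr => j _.
rewrite mulSn -{1}[(j * b)%N]add0n big_addn addnK big_mkord.
by apply: eq_bigr => k _; rewrite addnC.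
Qed.

Section Sampling.
Variable R : realType.
Local Notation w := (omega R).
Variable V : lmodType R[i].

Lemma ext_ord N (v : 'I_N -> V) (k : 'I_N) : ext v k = v k.
Proof. by rewrite /ext valK. Qed.

Lemma Finv_Pi q T N z (v : 'I_T -> V) t : (0 < q)%N -> (0 < T)%N -> N = (q * T)%N ->
  Finv z (fun k : 'I_N => q%:R^-1 *: Pi T 1 q N v k) t = upsample q (Finv (z ^+ q) v) t.
Proof.
move=> q0 T0 ->; rewrite /Finv /Pi /upsample.
under eq_bigr => k _ do rewrite expr1n scale1r.
rewrite -(big_mkord xpredT (fun k => w (q * T) ^+ (t * k) *: (q%:R^-1 *: ext v (k %% T)))).
rewrite sum_nat_mul_ord.
have E (j : 'I_q) (k : 'I_T) :
    w (q * T) ^+ (t * (j * T + k)) *: (q%:R^-1 *: ext v ((j * T + k) %% T))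
  = w q ^+ (j * t) *: (q%:R^-1 *: (w (q * T) ^+ (t * k) *: v k)).
  rewrite modnMDl modn_small // ext_ord mulnDr exprD -scalerA.
  rewrite (_ : (t * (j * T) = T * (j * t))%N); last by lia.
  rewrite exprM mulnC omega_mul_expr //.
  by congr (_ *: _); rewrite !scalerA mulrC.
under eq_bigr => j _ do under eq_bigr => k _ do rewrite E.
rewrite exchange_big /=.
under eq_bigr => k _ do rewrite -scaler_suml (sum_prim_root_expr (omega_prim R q0)).
case: (boolP (q %| t)%N) => [/dvdnP[s ->] | _]; last first.
  by rewrite big1 ?scaler0 // => k _; rewrite scale0r.
rewrite mulnK // -exprM mulnC; congr (_ *: _); apply: eq_bigr => k _.
rewrite scalerA mulfV ?pnatr_eq0 -?lt0n // scale1r.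
by rewrite -mulnA exprM omega_mul_expr.
Qed.

Lemma Finv_Pistar T q N z (y : 'I_N -> V) s : (0 < T)%N -> (0 < q)%N -> N = (T * q)%N ->
  Finv (z ^+ q) (Pistar T 1 q N y) s = downsample q (Finv z y) s.
Proof.
move=> T0 q0 eN; subst N; rewrite /Finv /Pistar /downsample conjc1 -exprM; congr (_ *: _).
under eq_bigr => t _ do under eq_bigr => k _ do rewrite expr1n scale1r.
pose G i := w (T * q) ^+ (q * s * i) *: ext y i.
have -> : \sum_(i < T * q) w (T * q) ^+ (q * s * i) *: y i = \sum_(0 <= i < T * q) G i.
  by rewrite big_mkord; apply: eq_bigr => i _; rewrite /G ext_ord.
have -> : \sum_(0 <= i < T * q) G i = \sum_(j < q) \sum_(k < T) G (j * T + k)%N.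
  by rewrite -sum_nat_mul_ord mulnC.
rewrite exchange_big /=; apply: eq_bigr => t _.
rewrite scaler_sumr; apply: eq_bigr => k _.
rewrite /G [(k * T + t)%N]addnC; congr (_ *: _).
rewrite -mulnA [w (T * q) ^+ _]exprM [(T * q)%N]mulnC omega_mul_expr // mulnDr exprD.
rewrite (_ : (s * (k * T) = T * (s * k))%N); last by lia.
by rewrite [w T ^+ (T * _)]exprM omega_order // expr1n mulr1.
Qed.

End Sampling.

Lemma can2_morph (S : Type) (f g h : S -> S) :
  cancel f g -> cancel g f -> {morph f : x / h x} -> {morph g : x / h x}.
Proof. by move=> fK gK fh x; apply: (can_inj fK); rewrite fh !gK. Qed.

Section Multirate.
Variable R : realType.
Variables U X Y : lmodType R[i].
Variables (A : nat -> {linear X -> X}) (B : nat -> {linear U -> X}).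
Variables (Cc : nat -> {linear X -> Y}) (D : nat -> {linear U -> Y}).
Variables (m n mb nb : nat) (z : R[i]).
Local Notation P := (m * nb)%N.

Lemma traj_solution (uo : nat -> U) (x : nat -> X) :
  (forall t, x t.+1 = A t (x t) + B t (uo t)) -> traj A B uo (x 0%N) = x.
Proof. by move=> hx; apply/funext; elim=> [|t /= ->]. Qed.

Lemma traj_SigmaEqs u x0 :
  let uo := upsample mb u in let x := traj A B uo x0 in
  SigmaEqs A B Cc D mb nb u uo x (outo Cc D uo x) (downsample nb (outo Cc D uo x)).
Proof. by []. Qed.

Hypotheses (m_gt0 : (0 < m)%N) (n_gt0 : (0 < n)%N) (mb_gt0 : (0 < mb)%N) (nb_gt0 : (0 < nb)%N).
Hypothesis P_eq : (m * nb = mb * n)%N.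
Hypotheses (A_periodic : forall t, A (t + P)%N = A t) (B_periodic : forall t, B (t + P)%N = B t).
Hypotheses (C_periodic : forall t, Cc (t + P)%N = Cc t) (D_periodic : forall t, D (t + P)%N = D t).
Hypothesis z_neq0 : z != 0.

Let P_gt0 : (0 < P)%N. Proof. by rewrite muln_gt0 m_gt0. Qed.

Lemma state_equationP (bx : 'I_P -> X) (buo : 'I_P -> U) :
  (forall k, Nop bx k = z *: Toep A bx k + z *: Toep B buo k) <->
  (forall t, Finv z bx t.+1 = A t (Finv z bx t) + B t (Finv z buo t)).
Proof.
have gE t : Finv z (fun k => z *: Toep A bx k + z *: Toep B buo k) t
    = z *: (A t (Finv z bx t) + B t (Finv z buo t)).
  by rewrite FinvD !FinvZ -!Finv_Toep // scalerDr.
apply: iff_trans (Finv_eqfunP (Nop bx) P_gt0 z_neq0 gE) _.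
split=> h t; last by rewrite Finv_Nop // h.
by apply: (scalerI z_neq0); rewrite -Finv_Nop // h.
Qed.

Lemma StarEqs_SigmaEqs bu buo (bx : 'I_P -> X) byo by_ :
  StarEqs A B Cc D m n mb nb z bu buo bx byo by_ <->
  SigmaEqs A B Cc D mb nb (Finv (z ^+ mb) bu) (Finv z buo) (Finv z bx)
    (Finv z byo) (Finv (z ^+ nb) by_).
Proof.
have output_eqP : (forall k, byo k = Toep Cc bx k + Toep D buo k) <->
    (forall t, Finv z byo t = Cc t (Finv z bx t) + D t (Finv z buo t)).
  by apply: Finv_eqfunP => // t; rewrite FinvD -!Finv_Toep.
have input_eqP : (forall k, buo k = mb%:R^-1 *: Pi n 1 mb P bu k) <->
    (forall t, Finv z buo t = upsample mb (Finv (z ^+ mb) bu) t).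
  by apply: Finv_eqfunP => // t; rewrite Finv_Pi.
have sampling_eqP : (forall k, by_ k = Pistar m 1 nb P byo k) <->
    (forall t, Finv (z ^+ nb) by_ t = downsample nb (Finv z byo) t).
  by apply: Finv_eqfunP; rewrite ?expf_neq0 // => t; rewrite Finv_Pistar.
by split=> -[/state_equationP ? /output_eqP ? /input_eqP ? /sampling_eqP ?].
Qed.

Lemma Fourier_StarEqs u uo x yo y :
  IsEMP n (z ^+ mb) u -> IsEMP P z uo -> IsEMP P z x -> IsEMP P z yo ->
  IsEMP m (z ^+ nb) y -> SigmaEqs A B Cc D mb nb u uo x yo y ->
  StarEqs A B Cc D m n mb nb z (Fourier n (z ^+ mb) u) (Fourier P z uo)
    (Fourier P z x) (Fourier P z yo) (Fourier m (z ^+ nb) y).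
Proof.
move=> hu huo hx hyo hy hS; apply/StarEqs_SigmaEqs.
by rewrite !EMP_Finv_Fourier ?expf_neq0.
Qed.

Section Resolvent.
Variable G : ('I_P -> X) -> ('I_P -> X).
Hypothesis GK : forall v, G (fun k => Nop v k - z *: Toep A v k) = v.
Hypothesis KG : forall v, (fun k => Nop (G v) k - z *: Toep A (G v) k) = v.

Definition star_sol (bu : 'I_n -> U) :=
  let buo k := mb%:R^-1 *: Pi n 1 mb P bu k in
  let bx := G (fun k => z *: Toep B buo k) in
  let byo k := Toep Cc bx k + Toep D buo k in
  (buo, bx, byo, Pistar m 1 nb P byo).

Lemma StarEqs_solP bu s :
  StarEqs A B Cc D m n mb nb z bu s.1.1.1 s.1.1.2 s.1.2 s.2 <-> s = star_sol bu.
Proof.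
split=> [|-> /=]; last first.
  split=> // k; set buo := fun k => mb%:R^-1 *: _.
  have /= <- := congr1 (fun f => f k) (KG (fun k => z *: Toep B buo k)).
  by rewrite addrC subrK.
case: s => [[[buo bx] byo] by_] /= [hx hyo huo hy].
have ebuo : buo = (star_sol bu).1.1.1 by apply/funext => k; rewrite huo.
have ebx : bx = (star_sol bu).1.1.2.
  rewrite -(GK bx) /=; congr G; apply/funext => k.
  by rewrite hx addrAC subrr add0r ebuo.
have ebyo : byo = (star_sol bu).1.2 by apply/funext => k; rewrite hyo ebx ebuo.
have eby : by_ = (star_sol bu).2 by apply/funext => k; rewrite hy ebyo.
by rewrite ebuo ebx ebyo eby.
Qed.

Lemma StarEqs_exists_unique bu :
  exists! s : ('I_P -> U) * ('I_P -> X) * ('I_P -> Y) * ('I_m -> Y),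
    StarEqs A B Cc D m n mb nb z bu s.1.1.1 s.1.1.2 s.1.2 s.2.
Proof. by exists (star_sol bu); split=> [|s /StarEqs_solP]; first exact/StarEqs_solP. Qed.

Lemma resolventZ a : {morph G : v / fun k => a *: v k}.
Proof.
apply: (can2_morph GK KG) => v; apply/funext => k.
by rewrite /Nop /= ToepZ scalerBr !scalerA [_ * a]mulrC [z * a]mulrC.
Qed.

Lemma StarEqs_transfer bu buo bx byo by_ :
  StarEqs A B Cc D m n mb nb z bu buo bx byo by_ ->
  let w k := mb%:R^-1 *: Pi n 1 mb P bu k in
  by_ = Pistar m 1 nb P (fun k => z *: Toep Cc (G (Toep B w)) k + Toep D w k).
Proof.
move/(StarEqs_solP _ (buo, bx, byo, by_)) => -[_ _ _ ->] w /=.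
by congr Pistar; apply/funext => k; rewrite resolventZ ToepZ.
Qed.

Lemma exists_unique_EMP_state u : IsEMP n (z ^+ mb) u ->
  let uo := upsample mb u in
  exists! x0, [/\ IsEMP P z uo, IsEMP P z (traj A B uo x0),
    IsEMP P z (outo Cc D uo (traj A B uo x0))
    & IsEMP m (z ^+ nb) (downsample nb (outo Cc D uo (traj A B uo x0)))].
Proof.
move=> hu uo; have [[[[buo bx] byo] by_] [hs uniq_s]] :=
  StarEqs_exists_unique (Fourier n (z ^+ mb) u).
exists (Finv z bx 0); split.
  have [hx hyo huo hy] := (StarEqs_SigmaEqs _ _ _ _ _).1 hs.
  have euo : uo = Finv z buo.
    by apply/funext => t; rewrite huo EMP_Finv_Fourier ?expf_neq0.
  rewrite euo (traj_solution hx); split; first by exists buo.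
  - by exists bx.
  - by exists byo => t; rewrite hyo.
  - by exists by_ => t; rewrite hy /downsample hyo.
move=> x1 [huo1 hx1 hyo1 hy1].
have [_ -> _ _] := uniq_s (_, _, _, _) (Fourier_StarEqs hu huo1 hx1 hyo1 hy1 (traj_SigmaEqs _ _)).
by rewrite EMP_Finv_Fourier.
Qed.

End Resolvent.

End Multirate.

Lemma gcdn_cofactors m n : (0 < m)%N -> (0 < n)%N ->
  [/\ 0 < m %/ gcdn m n, 0 < n %/ gcdn m n & m * (n %/ gcdn m n) = (m %/ gcdn m n) * n]%N.
Proof.
move=> m0 n0; have g0 : (0 < gcdn m n)%N by rewrite gcdn_gt0 m0.
split; first by rewrite divn_gt0 // dvdn_leq // dvdn_gcdl.
  by rewrite divn_gt0 // dvdn_leq // dvdn_gcdr.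
by rewrite muln_divA ?dvdn_gcdr // divn_mulAC // dvdn_gcdl.
Qed.

Unset Implicit Arguments.
Set Strict Implicit.

Theorem theorem7 (R : realType) (U X Y : normedModType R[i]) (m n : nat)
  (A : nat -> {linear X -> X}) (B : nat -> {linear U -> X})
  (Cc : nat -> {linear X -> Y}) (D : nat -> {linear U -> Y})
  (z : R[i]) (u : nat -> U) :
  (0 < m)%N -> (0 < n)%N ->
  let c := gcdn m n in
  let mb := (m %/ c)%N in
  let nb := (n %/ c)%N in
  let P := (m * nb)%N in
  (forall t, A (t + P)%N = A t) -> (forall t, B (t + P)%N = B t) ->
  (forall t, Cc (t + P)%N = Cc t) -> (forall t, D (t + P)%N = D t) ->
  (forall t, bounded_op (A t)) -> (forall t, bounded_op (B t)) ->
  (forall t, bounded_op (Cc t)) -> (forall t, bounded_op (D t)) ->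
  z != 0 ->
  rho (fun v : 'I_P -> X => Toep A v) z ->
  IsEMP n (z ^+ mb) u ->
  let uo := upsample mb u in
  let x_ := fun x0 : X => traj A B uo x0 in
  let yo_ := fun x0 : X => outo Cc D uo (x_ x0) in
  let y_ := fun x0 : X => downsample nb (yo_ x0) in
  let good := fun x0 : X =>
    [/\ IsEMP P z uo, IsEMP P z (x_ x0), IsEMP P z (yo_ x0)
      & IsEMP m (z ^+ nb) (y_ x0)] in
  let bu := Fourier n (z ^+ mb) u in
  (* part 1 *)
  (exists! x0 : X, good x0) /\
  (* part 2, direct *)
  (forall x0 : X, good x0 ->
     StarEqs A B Cc D m n mb nb z bu (Fourier P z uo) (Fourier P z (x_ x0))
       (Fourier P z (yo_ x0)) (Fourier m (z ^+ nb) (y_ x0))) /\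
  (* part 2, converse *)
  (forall (bu' : 'I_n -> U) (buo : 'I_P -> U) (bx : 'I_P -> X)
          (byo : 'I_P -> Y) (by_ : 'I_m -> Y),
     StarEqs A B Cc D m n mb nb z bu' buo bx byo by_ ->
     SigmaEqs A B Cc D mb nb (Finv (z ^+ mb) bu') (Finv z buo) (Finv z bx)
       (Finv z byo) (Finv (z ^+ nb) by_)
     /\ Finv z bx 0 = \sum_(k < P) bx k) /\
  (* part 3: unique determination *)
  (forall bu' : 'I_n -> U,
     exists! s : ('I_P -> U) * ('I_P -> X) * ('I_P -> Y) * ('I_m -> Y),
       StarEqs A B Cc D m n mb nb z bu' s.1.1.1 s.1.1.2 s.1.2 s.2) /\
  (* part 3: the map bu |-> by is G(z) *)
  (forall Rinv : ('I_P -> X) -> ('I_P -> X),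
     (forall v, Rinv (fun k => Nop v k - z *: Toep A v k) = v) ->
     (forall v, (fun k => Nop (Rinv v) k - z *: Toep A (Rinv v) k) = v) ->
     forall (bu' : 'I_n -> U) (buo : 'I_P -> U) (bx : 'I_P -> X)
            (byo : 'I_P -> Y) (by_ : 'I_m -> Y),
     StarEqs A B Cc D m n mb nb z bu' buo bx byo by_ ->
     let w := fun k : 'I_P => (mb%:R)^-1 *: Pi n 1 mb P bu' k in
     by_ = Pistar m 1 nb P
             (fun k => z *: Toep Cc (Rinv (Toep B w)) k + Toep D w k)).
Proof.
move=> m0 n0 c mb nb P hA hB hC hD _ _ _ _ z0 [G [GK [KG _]]] hu uo x_ yo_ y_ good bu.
have [mb0 nb0 eP] := gcdn_cofactors m0 n0.
split; first by move: (exists_unique_EMP_state m0 n0 mb0 nb0 eP hA hB hC hD z0 GK KG hu).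
split; first by move=> x0 [*]; apply: Fourier_StarEqs.
split; first by move=> *; split; [apply/StarEqs_SigmaEqs | exact: Finv0].
split; first exact: StarEqs_exists_unique GK KG.
by move=> Rinv RK KR bu' buo bx byo by_ hs; move: (StarEqs_transfer RK KR hs).
Qed.
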